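(* Let $f:[0,1]^n\to[0,1]$ be implementable by a Bernoulli factory, and suppose that for some open face $F_{A,S,B}$ of the hypercube we have $f|_{F_{A,S,B}}\not\equiv 0$. Then there exist an integer $m\ge 0$ and a constant $c>0$ such that $f(p)\ge c\left((1-p)^A\, p^S(1-p)^S\, p^B\right)^m$ for all $p\in[0,1]^n$.
   Context: A (multiparameter) Bernoulli factory with input $(p_1,\dots,p_n)$ is a (possibly infinite) rooted binary tree in which every node has either $2$ children or $0$ children (leaf). Each internal node is labelled either by an index $i\in[n]$ or by a constant $c\in(0,1)$; each leaf is labelled $0$ or $1$. To execute it with coins $p\in[0,1]^n$, start at the root; at a node labelled $i$ draw a fresh independent Bernoulli($p_i$) sample, at a node labelled $c$ a fresh independent Bernoulli($c$) sample; move to the child corresponding to the outcome; upon reaching a leaf output its label. $f$ is implementable by a Bernoulli factory if there is such a tree which, for every $p\in[0,1]^n$, reaches a leaf almost surely and outputs $1$ with probability exactly $f(p)$. For a partition $[n]=A\sqcup S\sqcup B$, the open face is $F_{A,S,B}=\{p\in[0,1]^n: p_i=0\ (i\in A),\ 0<p_i<1\ (i\in S),\ p_i=1\ (i\in B)\}$. For $T\subseteq[n]$, $p^T=\prod_{i\in T}p_i$, $(1-p)^T=\prod_{i\in T}(1-p_i)$. $f|_X\equiv 0$ means $f$ vanishes on all of $X$. *)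

From HB Require Import structures.
From mathcomp Require Import all_boot all_order all_algebra.
From mathcomp Require Import all_classical all_reals all_analysis.
Set Implicit Arguments. Unset Strict Implicit. Unset Printing Implicit Defensive.
Import Order.TTheory GRing.Theory Num.Theory.
Import numFieldNormedType.Exports.
Local Open Scope ring_scope.

Inductive bf_node (R : Type) (n : nat) :=
| BLeaf of bool
| BCoin of 'I_n
| BConst of R.
Arguments BLeaf {R n}. Arguments BCoin {R n}. Arguments BConst {R n}.

(* A (possibly infinite) rooted full binary tree is encoded by a labelling of
   all finite binary words (addresses; [::] is the root, rcons s true is the
   child taken on outcome 1, rcons s false on outcome 0).  The tree consists
   of the addresses whose proper prefixes are all internal nodes; labels of
   other addresses are irrelevant. *)
Definition bf_tree (R : Type) (n : nat) := seq bool -> bf_node R n.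

Fixpoint bf_out_within (R : realType) (n : nat) (T : bf_tree R n)
    (p : 'I_n -> R) (k : nat) (s : seq bool) (b : bool) : R :=
  match T s with
  | BLeaf b' => (b' == b)%:R
  | BCoin i => match k with
               | 0 => 0
               | k'.+1 => p i * bf_out_within T p k' (rcons s true) b
                          + (1 - p i) * bf_out_within T p k' (rcons s false) b
               end
  | BConst c => match k with
               | 0 => 0
               | k'.+1 => c * bf_out_within T p k' (rcons s true) b
                          + (1 - c) * bf_out_within T p k' (rcons s false) b
               end
  end.

Definition in_cube (R : realType) (n : nat) (p : 'I_n -> R) : Prop :=
  forall i, 0 <= p i <= 1.

Definition bf_consts_ok (R : realType) (n : nat) (T : bf_tree R n) : Prop :=
  forall s c, T s = BConst c -> 0 < c < 1.

(* f is implementable by a Bernoulli factory: for every p in [0,1]^n the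
   execution halts almost surely (probability of reaching a leaf within k
   steps tends to 1) and outputs 1 with probability exactly f p. *)
Definition bf_implementable (R : realType) (n : nat)
    (f : ('I_n -> R) -> R) : Prop :=
  exists T : bf_tree R n, bf_consts_ok T /\
    forall p, in_cube p ->
      ((fun k => bf_out_within T p k [::] true
                 + bf_out_within T p k [::] false) @ \oo --> (1 : R^o))%classic
      /\ ((fun k => bf_out_within T p k [::] true) @ \oo --> f p)%classic.

Definition in_face (R : realType) (n : nat) (A S B : {set 'I_n})
    (p : 'I_n -> R) : Prop :=
  (forall i, i \in A -> p i = 0) /\
  (forall i, i \in S -> 0 < p i < 1) /\
  (forall i, i \in B -> p i = 1).

Definition is_partition3 (n : nat) (A S B : {set 'I_n}) : Prop :=
  [disjoint A & S] /\ [disjoint A & B] /\ [disjoint S & B] /\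
  A :|: S :|: B = [set: 'I_n].

From HB Require Import structures.
From mathcomp Require Import all_boot all_order all_algebra.
From mathcomp Require Import all_classical all_reals all_analysis.
From mathcomp Require Import lra.

(* Write Q(p) = (1-p)^A (p(1-p))^S p^B and fix p0 in the face with f(p0) > 0.
   Every edge of the tree that has positive probability at p0 has, on the whole
   cube, probability at least a constant times Q(p): it is labelled by a
   constant c > 0, by an outcome 1 of a coin p_i with i outside A (and Q <= p_i),
   or by an outcome 0 with i outside B (and Q <= 1 - p_i).  Multiplying along a
   path of length k that reaches a 1-leaf with positive probability at p0 gives
   C Q(p)^k <= P_p(output 1 within k steps) <= f(p). *)

Set Implicit Arguments.
Unset Strict Implicit.
Unset Printing Implicit Defensive.
Import Order.TTheory GRing.Theory Num.Theory.
Import numFieldNormedType.Exports.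
Local Open Scope ring_scope.

Lemma cvgn_neq0_exists_gt0 (R : realFieldType) (u : R ^nat) (l : R) :
  (forall k, 0 <= u k) -> (u @ \oo --> l)%classic -> l != 0 -> exists k, 0 < u k.
Proof.
move=> u_ge0 ul l_neq0.
have l_ge0 : 0 <= l.
  by rewrite -(cvg_lim _ ul) //; apply: limr_ge; [exact: cvgP ul | exact: nearW].
have l_gt0 : 0 < l by rewrite lt0r l_neq0.
have [N _ uN] := cvgr_gt l ul 0 l_gt0.
by exists N; apply: uN => /=.
Qed.

Lemma prodr_in01 (R : numDomainType) (I : finType) (X : {pred I}) (F : I -> R) :
  (forall i, 0 <= F i <= 1) -> 0 <= \prod_(i in X) F i <= 1.
Proof.
by move=> F01; rewrite prodr_ge0 ?prodr_ile1 // => i _; case/andP: (F01 i).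
Qed.

Lemma prodr_le_factor (R : numDomainType) (I : finType) (X : {pred I}) (F : I -> R) j :
  (forall i, 0 <= F i <= 1) -> j \in X -> \prod_(i in X) F i <= F j.
Proof.
move=> F01 Xj; rewrite (bigD1 j) //= ler_piMr //; first by case/andP: (F01 j).
by apply: prodr_ile1 => i _.
Qed.

Section FaceWeight.
Variables (R : realType) (n : nat) (A S B : {set 'I_n}).
Implicit Types (p : 'I_n -> R).

Definition face_weight p : R :=
  (\prod_(i in A) (1 - p i)) * (\prod_(i in S) (p i * (1 - p i)))
  * (\prod_(i in B) p i).

Lemma in_cube_factors p : in_cube p -> forall i,
  [/\ 0 <= 1 - p i <= 1, 0 <= p i * (1 - p i) <= 1 & 0 <= p i <= 1].
Proof.
move=> p01 i; have /andP[p0 p1] := p01 i.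
by rewrite subr_ge0 gerBl p0 p1 mulr_ge0 ?subr_ge0 ?mulr_ile1 ?gerBl ?subr_ge0.
Qed.

Lemma face_factors_in01 p : in_cube p ->
  [/\ 0 <= \prod_(i in A) (1 - p i) <= 1,
      0 <= \prod_(i in S) (p i * (1 - p i)) <= 1 &
      0 <= \prod_(i in B) p i <= 1].
Proof.
by move=> /in_cube_factors F01; split; apply: prodr_in01 => i; case: (F01 i).
Qed.

Lemma face_weight_ge0 p : in_cube p -> 0 <= face_weight p.
Proof.
by case/face_factors_in01 => /andP[a0 _] /andP[s0 _] /andP[b0 _]; rewrite !mulr_ge0.
Qed.

Lemma face_weight_le_factors p : in_cube p ->
  [/\ face_weight p <= \prod_(i in A) (1 - p i),
      face_weight p <= \prod_(i in S) (p i * (1 - p i)) &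
      face_weight p <= \prod_(i in B) p i].
Proof.
case/face_factors_in01 => /andP[a0 a1] /andP[s0 s1] /andP[b0 b1].
rewrite /face_weight; split.
- by rewrite -mulrA ler_piMr ?mulr_ge0 ?mulr_ile1.
- by rewrite (le_trans (ler_piMr _ b1)) ?mulr_ge0 ?ler_piMl.
- by rewrite ler_piMl ?mulr_ge0 ?mulr_ile1.
Qed.

Lemma face_weight_le1 p : in_cube p -> face_weight p <= 1.
Proof.
move=> p01; have [wA _ _] := face_weight_le_factors p01.
by have [/andP[_ a1] _ _] := face_factors_in01 p01; apply: le_trans wA a1.
Qed.

Hypothesis ASB : is_partition3 A S B.

Lemma partition3_cover i : [|| i \in A, i \in S | i \in B].
Proof.
have [_ [_ [_ cover]]] := ASB.
have : i \in A :|: S :|: B by rewrite cover inE.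
by rewrite !inE -orbA.
Qed.

Lemma face_weight_le_p p i : in_cube p -> i \notin A -> face_weight p <= p i.
Proof.
move=> p01 Ai; have [_ wS wB] := face_weight_le_factors p01.
have F01 := in_cube_factors p01.
have [/andP[_ qi1] _ /andP[pi0 _]] := F01 i.
move: (partition3_cover i); rewrite (negbTE Ai) /= => /orP[Si|Bi].
- apply: (le_trans wS); apply: le_trans _ (ler_piMr pi0 qi1).
  by apply: prodr_le_factor Si => j; case: (F01 j).
- apply: (le_trans wB); apply: prodr_le_factor Bi => j.
  by case: (F01 j).
Qed.

Lemma face_weight_le_1mp p i : in_cube p -> i \notin B -> face_weight p <= 1 - p i.
Proof.
move=> p01 Bi; have [wA wS _] := face_weight_le_factors p01.
have F01 := in_cube_factors p01.
have [/andP[qi0 _] _ /andP[_ pi1]] := F01 i.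
move: (partition3_cover i); rewrite (negbTE Bi) orbF => /orP[Ai|Si].
- apply: (le_trans wA); apply: prodr_le_factor Ai => j.
  by case: (F01 j).
- apply: (le_trans wS); apply: le_trans _ (ler_piMl qi0 pi1).
  by apply: prodr_le_factor Si => j; case: (F01 j).
Qed.

Lemma in_face_cube p : in_face A S B p -> in_cube p.
Proof.
move=> [pA [pS pB]] i; have /or3P[Ai|Si|Bi] := partition3_cover i.
- by rewrite pA ?lexx ?ler01.
- by have /andP[pi0 pi1] := pS i Si; rewrite !ltW.
- by rewrite pB ?lexx ?ler01.
Qed.

End FaceWeight.

Section Execution.
Variables (R : realType) (n : nat) (T : bf_tree R n).
Implicit Types (p : 'I_n -> R) (s : seq bool) (k : nat) (b : bool).

Definition bf_internal s : bool := if T s is BLeaf _ then false else true.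

(* Meaningful only at internal nodes. *)
Definition bf_edge p s b : R :=
  let q := match T s with BCoin i => p i | BConst c => c | BLeaf _ => 0 end in
  if b then q else 1 - q.

Lemma bf_out_within0 p s b : bf_internal s -> bf_out_within T p 0 s b = 0.
Proof. by rewrite /bf_internal /=; case: (T s). Qed.

Lemma bf_out_withinS p k s b : bf_internal s ->
  bf_out_within T p k.+1 s b =
    bf_edge p s true * bf_out_within T p k (rcons s true) b
    + bf_edge p s false * bf_out_within T p k (rcons s false) b.
Proof. by rewrite /bf_internal /bf_edge /=; case: (T s). Qed.

Lemma bf_out_within_leaf p p' k k' s b : ~~ bf_internal s ->
  bf_out_within T p k s b = bf_out_within T p' k' s b.
Proof. by rewrite /bf_internal; case: k => [|k]; case: k' => [|k'] /=; case: (T s). Qed.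

Hypothesis Tc : bf_consts_ok T.

Lemma bf_edge_ge0 p s b : in_cube p -> 0 <= bf_edge p s b.
Proof.
move=> p01; rewrite /bf_edge; case E: (T s) => [b'|i|c].
- by case: b; rewrite ?subr0 ?lexx ?ler01.
- by have /andP[pi0 pi1] := p01 i; case: b; rewrite ?subr_ge0.
- by have /andP[c0 c1] := Tc E; case: b; rewrite ?subr_ge0 ltW.
Qed.

Lemma bf_out_within_ge0 p k s b : in_cube p -> 0 <= bf_out_within T p k s b.
Proof.
move=> p01; elim: k s => [|k IH] s; have [hs|hs] := boolP (bf_internal s).
- by rewrite bf_out_within0.
- by move: hs; rewrite /bf_internal /=; case: (T s) => //= b' _; apply: ler0n.
- by rewrite bf_out_withinS // addr_ge0 // mulr_ge0 ?bf_edge_ge0.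
- by rewrite (bf_out_within_leaf p p k.+1 k).
Qed.

Lemma bf_out_within_leS p k s b : in_cube p ->
  bf_out_within T p k s b <= bf_out_within T p k.+1 s b.
Proof.
move=> p01; elim: k s => [|k IH] s; have [hs|hs] := boolP (bf_internal s).
- by rewrite bf_out_within0 // bf_out_within_ge0.
- by rewrite (bf_out_within_leaf p p 1 0).
- rewrite (bf_out_withinS p k _ hs) (bf_out_withinS p k.+1 _ hs).
  by apply: lerD; apply: ler_wpM2l; rewrite ?bf_edge_ge0 ?IH.
- by rewrite (bf_out_within_leaf p p k.+2 k.+1).
Qed.

Lemma bf_out_within_le_lim p s b l k : in_cube p ->
  ((fun k => bf_out_within T p k s b) @ \oo --> l)%classic ->
  bf_out_within T p k s b <= l.
Proof.
move=> p01 out_l; rewrite -(cvg_lim _ out_l) //.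
apply: nondecreasing_cvgn_le (cvgP _ out_l) k.
by apply/nondecreasing_seqP => k'; apply: bf_out_within_leS.
Qed.

Lemma bf_out_within_branch_le p k s b b' : in_cube p -> bf_internal s ->
  bf_edge p s b * bf_out_within T p k (rcons s b) b' <= bf_out_within T p k.+1 s b'.
Proof.
move=> p01 hs; rewrite bf_out_withinS //.
by case: b; rewrite ?lerDl ?lerDr mulr_ge0 ?bf_edge_ge0 ?bf_out_within_ge0.
Qed.

Lemma bf_out_withinS_gt0 p k s b : in_cube p -> bf_internal s ->
  0 < bf_out_within T p k.+1 s b ->
  exists b', 0 < bf_edge p s b' /\ 0 < bf_out_within T p k (rcons s b') b.
Proof.
move=> p01 hs; rewrite bf_out_withinS // => out_gt0.
have edge_out_gt0 b' : 0 < bf_edge p s b' * bf_out_within T p k (rcons s b') b ->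
    0 < bf_edge p s b' /\ 0 < bf_out_within T p k (rcons s b') b.
  by rewrite mulr_ge0_gt0 ?bf_edge_ge0 ?bf_out_within_ge0 // => /andP.
have [t_gt0|t_le0] := ltP 0 (bf_edge p s true * bf_out_within T p k (rcons s true) b).
  by exists true; apply: edge_out_gt0.
by exists false; apply: edge_out_gt0; lra.
Qed.

Variables (A S B : {set 'I_n}) (p0 : 'I_n -> R).
Hypotheses (ASB : is_partition3 A S B) (p0_face : in_face A S B p0).

Lemma bf_edge_face_bound s b : bf_internal s -> 0 < bf_edge p0 s b ->
  exists2 d, 0 < d & forall p, in_cube p -> d * face_weight A S B p <= bf_edge p s b.
Proof.
have [p0A [_ p0B]] := p0_face.
rewrite /bf_internal /bf_edge; case E: (T s) => [//|i|c] _ edge_gt0.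
- exists 1 => // p p01; rewrite mul1r; case: b edge_gt0 => edge_gt0.
  + apply: face_weight_le_p => //; apply/negP => /p0A p0i.
    by rewrite p0i ltxx in edge_gt0.
  + apply: face_weight_le_1mp => //; apply/negP => /p0B p0i.
    by rewrite p0i subrr ltxx in edge_gt0.
- exists (if b then c else 1 - c) => // p p01.
  by apply: ler_piMr; [exact: ltW | exact: face_weight_le1].
Qed.

Lemma bf_leaf_face_bound k s b : ~~ bf_internal s -> 0 < bf_out_within T p0 k s b ->
  exists2 C, 0 < C & forall p, in_cube p ->
    C * face_weight A S B p ^+ k <= bf_out_within T p k s b.
Proof.
move=> hs out_gt0; exists (bf_out_within T p0 k s b) => // p p01.
have w_ge0 := face_weight_ge0 A S B p01.
rewrite (bf_out_within_leaf p p0 k k) //; apply: ler_piMr; first exact: ltW.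
by rewrite exprn_ile1 ?face_weight_le1.
Qed.

Lemma bf_out_within_face_bound k s b : 0 < bf_out_within T p0 k s b ->
  exists2 C, 0 < C & forall p, in_cube p ->
    C * face_weight A S B p ^+ k <= bf_out_within T p k s b.
Proof.
have p0_cube := in_face_cube ASB p0_face.
elim: k s => [|k IH] s out_gt0.
all: have [hs|hs] := boolP (bf_internal s); last exact: bf_leaf_face_bound.
  by move: out_gt0; rewrite bf_out_within0 ?ltxx.
have [b' [edge_gt0 branch_gt0]] := bf_out_withinS_gt0 p0_cube hs out_gt0.
have [d d_gt0 edge_ge] := bf_edge_face_bound hs edge_gt0.
have [C C_gt0 branch_ge] := IH _ branch_gt0.
exists (d * C); first by rewrite mulr_gt0.
move=> p p01; apply: le_trans _ (bf_out_within_branch_le k b' b p01 hs).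
have w_ge0 := face_weight_ge0 A S B p01.
rewrite exprS mulrACA; apply: ler_pM; rewrite ?edge_ge ?branch_ge //.
  by rewrite mulr_ge0 // ltW.
by rewrite mulr_ge0 ?exprn_ge0 // ltW.
Qed.

End Execution.

Theorem lemma2 (R : realType) (n : nat) (f : ('I_n -> R) -> R)
    (A S B : {set 'I_n}) :
  bf_implementable f ->
  is_partition3 A S B ->
  (exists p, in_face A S B p /\ f p != 0) ->
  exists (m : nat) (c : R), 0 < c /\
    forall p : 'I_n -> R, in_cube p ->
      c * ((\prod_(i in A) (1 - p i)) * (\prod_(i in S) (p i * (1 - p i)))
           * (\prod_(i in B) p i)) ^+ m <= f p.
Proof.
move=> [T [Tc T_cvg]] ASB [p0 [p0_face fp0_neq0]].
have p0_cube := in_face_cube ASB p0_face.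
have [k out_gt0] : exists k, 0 < bf_out_within T p0 k [::] true.
  apply: cvgn_neq0_exists_gt0 (T_cvg p0 p0_cube).2 fp0_neq0 => k.
  exact: bf_out_within_ge0.
have [C C_gt0 out_ge] := bf_out_within_face_bound Tc ASB p0_face out_gt0.
exists k, C; split => // p p01.
exact: le_trans (out_ge p p01) (bf_out_within_le_lim Tc k p01 (T_cvg p p01).2).
Qed.
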